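(* Under the standing setup, for all $t\ge0$ and $u_0\in\mathbb R^d$, $\mathscr S(t)u_0=\sup_{n\in\mathbb N}\mathcal E_{t/n}^{\,n}u_0=\lim_{n\to\infty}\mathcal E_{2^{-n}t}^{\,2^n}u_0,$ where $\mathcal E_h^{\,k}$ denotes the $k$-fold composition of $\mathcal E_h$.
   Context: Standing setup: $d\in\mathbb N$; vectors in $\mathbb R^d$; inequalities and suprema of vectors are componentwise; reals are identified with constant vectors. A $Q$-matrix is $q\in\mathbb R^{d\times d}$ with $q_{ii}\le0$, $q_{ij}\ge0$ ($i\ne j$), $\sum_jq_{ij}=0$. Let $\mathcal P$ be a set of $Q$-matrices and $f=(f_q)_{q\in\mathcal P}\subset\mathbb R^d$ with $\sup_{q\in\mathcal P}f_q=f_{q_0}=0$ for some $q_0\in\mathcal P$, such that $\mathcal Qu:=\sup_{q\in\mathcal P}(qu+f_q)$ is finite for every $u\in\mathbb R^d$. For $q\in\mathcal P$, $t\ge0$: $S_q(t)u_0:=e^{tq}u_0+\int_0^te^{sq}f_q\,ds$. For $h\ge0$: $\mathcal E_hu_0:=\sup_{q\in\mathcal P}S_q(h)u_0$. $P$ is the set of finite subsets $\pi\subset[0,\infty)$ with $0\in\pi$; $P_t:=\{\pi\in P:\max\pi=t\}$. For $\pi=\{t_0,\dots,t_m\}$ with $0=t_0<\dots<t_m$, $m\ge1$, $\mathcal E_\pi:=\mathcal E_{t_1-t_0}\circ\cdots\circ\mathcal E_{t_m-t_{m-1}}$, and $\mathcal E_{\{0\}}:=\mathcal E_0$. The Nisio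 semigroup of $(\mathcal P,f)$ is $\mathscr S(t)u_0:=\sup_{\pi\in P_t}\mathcal E_\pi u_0$. *)

From Stdlib Require Import Reals Arith Factorial List Classical ClassicalEpsilon.
Open Scope R_scope.

(* Vectors in R^d are functions nat -> R of which only the components i < d
   matter; d x d matrices are functions nat -> nat -> R. *)
Definition vec := nat -> R.
Definition mat := nat -> nat -> R.

Fixpoint sumd (n : nat) (g : nat -> R) : R :=
  match n with O => 0 | S m => sumd m g + g m end.

Definition mv (d : nat) (q : mat) (u : vec) : vec :=
  fun i => sumd d (fun j => q i j * u j).

Fixpoint mpow (d : nat) (q : mat) (k : nat) (u : vec) : vec :=
  match k with O => u | S k' => mv d q (mpow d q k' u) end.

(* Q-matrix (entries outside the d x d block are required to vanish, so
   that the representation of a matrix is canonical). *)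
Definition Qmatrix (d : nat) (q : mat) : Prop :=
  (forall i j, (d <= i)%nat \/ (d <= j)%nat -> q i j = 0) /\
  (forall i, (i < d)%nat -> q i i <= 0) /\
  (forall i j, (i < d)%nat -> (j < d)%nat -> i <> j -> 0 <= q i j) /\
  (forall i, (i < d)%nat -> sumd d (fun j => q i j) = 0).

(* limit of a real sequence (arbitrary value if it does not converge) *)
Definition lim (a : nat -> R) : R := epsilon (inhabits 0) (fun l => Un_cv a l).

Definition expm (d : nat) (q : mat) (t : R) (u : vec) : vec :=
  fun i => lim (fun N => sum_f_R0 (fun k => t ^ k / INR (fact k) * mpow d q k u i) N).

(* Riemann integral int_a^b g (arbitrary value if g is not integrable) *)
Definition integral (g : R -> R) (a b : R) : R :=
  epsilon (inhabits 0)
    (fun I => exists pr : Riemann_integrable g a b, RiemannInt pr = I).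

Definition Sq (d : nat) (q : mat) (fq : vec) (t : R) (u0 : vec) : vec :=
  fun i => expm d q t u0 i + integral (fun s => expm d q s fq i) 0 t.

(* componentwise supremum of a set of vectors (least upper bound in each
   component; arbitrary value if it does not exist) *)
Definition vsup (A : vec -> Prop) : vec :=
  fun i => epsilon (inhabits 0) (is_lub (fun x => exists v, A v /\ v i = x)).

Definition Eh (d : nat) (P : mat -> Prop) (f : mat -> vec) (h : R) (u0 : vec) : vec :=
  vsup (fun v => exists q, P q /\ v = Sq d q (f q) h u0).

(* A finite set pi = {t_0 < ... < t_m} is represented by the strictly
   increasing list [t_0; ...; t_m]. *)
Fixpoint incr (l : list R) : Prop :=
  match l with
  | a :: ((b :: _) as r) => a < b /\ incr r
  | _ => True
  end.

Definition partition (t : R) (l : list R) : Prop :=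
  (exists r, l = 0 :: r) /\ incr l /\ last l 0 = t.

Fixpoint Epi_aux (d : nat) (P : mat -> Prop) (f : mat -> vec) (l : list R) (u : vec) : vec :=
  match l with
  | t0 :: ((t1 :: _) as r) => Eh d P f (t1 - t0) (Epi_aux d P f r u)
  | _ => u
  end.

Definition Epi (d : nat) (P : mat -> Prop) (f : mat -> vec) (l : list R) (u : vec) : vec :=
  match l with
  | _ :: nil => Eh d P f 0 u
  | _ => Epi_aux d P f l u
  end.

Definition Nisio (d : nat) (P : mat -> Prop) (f : mat -> vec) (t : R) (u0 : vec) : vec :=
  vsup (fun v => exists l, partition t l /\ v = Epi d P f l u0).

Fixpoint iterv (k : nat) (F : vec -> vec) (u : vec) : vec :=
  match k with O => u | S k' => F (iterv k' F u) end.

(* Each [S_q] is monotone, commutes with adding constants and is a semigroup; hence [E_h] is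
   monotone and commutes with constants, while the semigroup law weakens to
   [E_{h+k} <= E_h E_k], so refining a partition can only increase [E_pi].  For bounded [u] the
   drift [|E_h u - u|] is at most [C h].  Cutting the [m] steps of a partition [pi] of [[0, t]]
   at the dyadic grid of mesh [t 2^-n] therefore gives
   [E_pi u <= E_{t 2^-n}^(2^n) u + 2 C m t 2^-n], while every uniform composition [E_{t/n}^n]
   is itself some [E_pi].  Positivity of [e^{tq}], which drives all of this, comes from
   [q + c I >= 0] and uniqueness for [g' = q g]. *)

From Coquelicot Require Import Coquelicot.
From Stdlib Require Import Reals Factorial Lra Lia List Classical ClassicalEpsilon.
Open Scope R_scope.

Lemma sumd_ext n g h : (forall j, (j < n)%nat -> g j = h j) -> sumd n g = sumd n h.
Proof.
  induction n as [|n IH]; simpl; intros H; auto.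
  rewrite IH by (intros; apply H; lia). rewrite (H n) by lia. reflexivity.
Qed.

Lemma sumd_plus n g h : sumd n (fun j => g j + h j) = sumd n g + sumd n h.
Proof. induction n as [|n IH]; simpl; [lra|]. rewrite IH; lra. Qed.

Lemma sumd_scal n c g : sumd n (fun j => c * g j) = c * sumd n g.
Proof. induction n as [|n IH]; simpl; [lra|]. rewrite IH; lra. Qed.

Lemma sumd_zero n : sumd n (fun _ => 0) = 0.
Proof. induction n as [|n IH]; simpl; [lra|]. rewrite IH; lra. Qed.

Lemma sumd_le n g h : (forall j, (j < n)%nat -> g j <= h j) -> sumd n g <= sumd n h.
Proof.
  induction n as [|n IH]; simpl; intros H; [lra|].
  assert (sumd n g <= sumd n h) by (apply IH; intros; apply H; lia).
  assert (g n <= h n) by (apply H; lia).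
  lra.
Qed.

Lemma sumd_abs n g : Rabs (sumd n g) <= sumd n (fun j => Rabs (g j)).
Proof.
  induction n as [|n IH]; simpl; [rewrite Rabs_R0; lra|].
  eapply Rle_trans; [apply Rabs_triang|]. lra.
Qed.

Lemma sumd_nonneg n g : (forall j, (j < n)%nat -> 0 <= g j) -> 0 <= sumd n g.
Proof. intros H. rewrite <- (sumd_zero n). apply sumd_le; auto. Qed.

Lemma sumd_ge_term n g k :
  (forall j, (j < n)%nat -> 0 <= g j) -> (k < n)%nat -> g k <= sumd n g.
Proof.
  induction n as [|n IH]; simpl; intros H Hk; [lia|].
  assert (0 <= sumd n g) by (apply sumd_nonneg; intros; apply H; lia).
  assert (0 <= g n) by (apply H; lia).
  destruct (Nat.eq_dec k n) as [->|Hne]; [lra|].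
  assert (g k <= sumd n g) by (apply IH; [intros; apply H | ]; lia).
  lra.
Qed.

Lemma sumd_delta n c j w : (j < n)%nat ->
  sumd n (fun k => (if Nat.eq_dec j k then c else 0) * w k) = c * w j.
Proof.
  induction n as [|n IH]; simpl; intros Hj; [lia|].
  destruct (Nat.eq_dec j n) as [->|Hne].
  - rewrite (sumd_ext n _ (fun _ => 0)), sumd_zero; [lra|].
    intros k Hk. destruct (Nat.eq_dec n k); [lia|lra].
  - rewrite IH by lia. lra.
Qed.

Definition norm1 (d : nat) (u : vec) : R := sumd d (fun j => Rabs (u j)).
Definition mat_norm1 (d : nat) (q : mat) : R :=
  sumd d (fun i => sumd d (fun j => Rabs (q i j))).

Lemma norm1_nonneg d u : 0 <= norm1 d u.
Proof. apply sumd_nonneg; intros; apply Rabs_pos. Qed.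

Lemma mat_norm1_nonneg d q : 0 <= mat_norm1 d q.
Proof. apply sumd_nonneg; intros; apply sumd_nonneg; intros; apply Rabs_pos. Qed.

Lemma Rabs_le_norm1 d u i : (i < d)%nat -> Rabs (u i) <= norm1 d u.
Proof.
  intros Hi. apply (sumd_ge_term d (fun j => Rabs (u j))); auto.
  intros; apply Rabs_pos.
Qed.

Lemma norm1_mv d q u : norm1 d (mv d q u) <= mat_norm1 d q * norm1 d u.
Proof.
  unfold norm1 at 1, mat_norm1, mv. rewrite Rmult_comm, <- sumd_scal.
  apply sumd_le; intros i Hi. eapply Rle_trans; [apply sumd_abs|].
  rewrite <- sumd_scal. apply sumd_le; intros j Hj.
  rewrite Rabs_mult, Rmult_comm.
  apply Rmult_le_compat_r; [apply Rabs_pos | apply Rabs_le_norm1; auto].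
Qed.

Lemma norm1_mpow d q k u : norm1 d (mpow d q k u) <= mat_norm1 d q ^ k * norm1 d u.
Proof.
  induction k as [|k IH]; simpl; [lra|].
  eapply Rle_trans; [apply norm1_mv|]. rewrite Rmult_assoc.
  apply Rmult_le_compat_l; auto. apply mat_norm1_nonneg.
Qed.

Lemma mpow_mv d q k u : mpow d q k (mv d q u) = mpow d q (S k) u.
Proof. induction k as [|k IH]; simpl; auto. simpl in IH. rewrite IH. auto. Qed.

Lemma mv_lin d q a b x y i :
  mv d q (fun j => a * x j + b * y j) i = a * mv d q x i + b * mv d q y i.
Proof. unfold mv. rewrite <- !sumd_scal, <- sumd_plus. apply sumd_ext; intros; ring. Qed.

Lemma mv_coords d q x y i : (forall j, (j < d)%nat -> x j = y j) -> mv d q x i = mv d q y i.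
Proof. intros H. apply sumd_ext. intros j Hj. rewrite H; auto. Qed.

Lemma mpow_lin d q a b u v k i :
  mpow d q k (fun j => a * u j + b * v j) i = a * mpow d q k u i + b * mpow d q k v i.
Proof.
  revert i; induction k as [|k IH]; intros i; simpl; auto.
  rewrite (mv_coords d q _ (fun j => a * mpow d q k u j + b * mpow d q k v j))
    by (intros; apply IH).
  apply mv_lin.
Qed.

Lemma mpow_coords d q u v k i : (forall j, (j < d)%nat -> u j = v j) -> (i < d)%nat ->
  mpow d q k u i = mpow d q k v i.
Proof.
  intros H. revert i. induction k as [|k IH]; intros i Hi; simpl; auto.
  apply mv_coords. intros j Hj. auto.
Qed.

Lemma mpow_nonneg d q u k i :
  (forall a b, (a < d)%nat -> (b < d)%nat -> 0 <= q a b) ->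
  (forall j, (j < d)%nat -> 0 <= u j) -> (i < d)%nat -> 0 <= mpow d q k u i.
Proof.
  intros Hq Hu. revert i. induction k as [|k IH]; intros i Hi; simpl; auto.
  apply sumd_nonneg. intros j Hj. apply Rmult_le_pos; auto.
Qed.

Lemma mv_const d q c i : Qmatrix d q -> (i < d)%nat -> mv d q (fun _ => c) i = 0.
Proof.
  intros [_ [_ [_ Hrow]]] Hi. unfold mv.
  rewrite (sumd_ext d _ (fun j => c * q i j)) by (intros; ring).
  rewrite sumd_scal, Hrow by auto. ring.
Qed.

Lemma mpow_const d q c k i : Qmatrix d q -> (i < d)%nat -> mpow d q (S k) (fun _ => c) i = 0.
Proof.
  intros Hq. revert i. induction k as [|k IH]; intros i Hi; [exact (mv_const d q c i Hq Hi)|].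
  change (mv d q (mpow d q (S k) (fun _ => c)) i = 0).
  rewrite (mv_coords d q _ (fun _ => 0)) by auto. apply mv_const; auto.
Qed.

(* Since the rows of [q] sum to zero, [(q u)_i = sum_j q_ij (u_j - u_i)] and only the
   nonnegative off-diagonal entries contribute. *)
Lemma Qmatrix_mv_le d q u M i : Qmatrix d q ->
  (forall j, (j < d)%nat -> Rabs (u j) <= M) -> (i < d)%nat ->
  mv d q u i <= - (2 * M) * q i i.
Proof.
  intros [_ [_ [Hoff Hrow]]] Hu Hi.
  assert (Hcentered : mv d q u i = sumd d (fun j => q i j * (u j - u i))).
  { unfold mv.
    rewrite (sumd_ext d (fun j => q i j * (u j - u i)) (fun j => q i j * u j + (- u i) * q i j))
      by (intros; ring).
    rewrite sumd_plus, sumd_scal, Hrow by auto. ring. }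
  rewrite Hcentered.
  assert (Hle : sumd d (fun j => q i j * (u j - u i))
    <= sumd d (fun j => (2 * M) * q i j + (if Nat.eq_dec i j then - (2 * M) * q i i else 0) * 1)).
  { apply sumd_le. intros j Hj. destruct (Nat.eq_dec i j) as [<-|Hne]; [lra|].
    assert (0 <= q i j) by (apply Hoff; auto).
    assert (u j - u i <= 2 * M).
    { assert (H1 := Hu j Hj). assert (H2 := Hu i Hi).
      apply Rabs_le_between in H1. apply Rabs_le_between in H2. lra. }
    assert (q i j * (u j - u i) <= q i j * (2 * M)) by (apply Rmult_le_compat_l; auto).
    lra. }
  rewrite sumd_plus, sumd_scal, Hrow, sumd_delta in Hle by auto. lra.
Qed.

(** * The matrix exponential as a power series *)

Lemma lim_unique a l : Un_cv a l -> lim a = l.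
Proof.
  intros H. unfold lim.
  assert (Hs := epsilon_spec (inhabits 0) (fun l => Un_cv a l) (ex_intro _ l H)).
  eapply UL_sequence; eauto.
Qed.

Lemma INR_fact_pos k : 0 < INR (fact k).
Proof. apply lt_0_INR, lt_O_fact. Qed.

Lemma PSeries_sumd n (c : nat -> R) (a : nat -> nat -> R) x :
  (forall j, (j < n)%nat -> ex_pseries (a j) x) ->
  ex_pseries (fun k => sumd n (fun j => c j * a j k)) x /\
  sumd n (fun j => c j * PSeries (a j) x) = PSeries (fun k => sumd n (fun j => c j * a j k)) x.
Proof.
  induction n as [|n IH]; intros H; simpl.
  - split.
    + exists 0. unfold is_pseries, is_series.
      eapply filterlim_ext; [|apply filterlim_const]. intros N. simpl.
      induction N as [|N IHN]; [rewrite sum_O | rewrite sum_Sn, <- IHN];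
        unfold scal, plus; simpl; unfold mult; simpl; ring.
    + symmetry. apply PSeries_const_0.
  - destruct IH as [IH1 IH2]; [intros; apply H; lia|].
    assert (Hs : ex_pseries (PS_scal (c n) (a n)) x)
      by (apply ex_pseries_scal; [apply Rmult_comm | apply H; lia]).
    split.
    + eapply ex_pseries_ext; [|apply (ex_pseries_plus _ _ _ IH1 Hs)]. intros k. reflexivity.
    + rewrite IH2, <- PSeries_scal, <- PSeries_plus; auto.
Qed.

Section Exponential.
Variables (d : nat) (q : mat).

Definition expm_coef (u : vec) (i k : nat) : R := mpow d q k u i / INR (fact k).

Lemma CV_radius_expm_coef u i x : (i < d)%nat -> Rbar_lt (Rabs x) (CV_radius (expm_coef u i)).
Proof.
  intros Hi. set (r := Rabs x + 1).
  assert (Hr : 0 <= r) by (unfold r; generalize (Rabs_pos x); lra).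
  destruct (maj_by_pos _ (exist _ 0 (cv_speed_pow_fact (mat_norm1 d q * r)))) as [B [_ HB]].
  assert (Hrad : Rbar_le r (CV_radius (expm_coef u i))).
  { apply (proj1 (CV_radius_bounded (expm_coef u i))).
    exists (norm1 d u * B). intros n. unfold expm_coef.
    assert (Hf := INR_fact_pos n).
    assert (Hrn : 0 <= r ^ n / INR (fact n)) by (apply Rdiv_le_0_compat; [apply pow_le|]; lra).
    replace (mpow d q n u i / INR (fact n) * r ^ n) with (mpow d q n u i * (r ^ n / INR (fact n)))
      by (field; lra).
    rewrite Rabs_mult, (Rabs_pos_eq (r ^ n / INR (fact n))) by exact Hrn.
    specialize (HB n).
    rewrite Rabs_pos_eq, Rpow_mult_distr in HB
      by (apply Rdiv_le_0_compat; [apply pow_le, Rmult_le_pos, Hr; apply mat_norm1_nonneg|lra]).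
    apply Rle_trans with (mat_norm1 d q ^ n * norm1 d u * (r ^ n / INR (fact n))).
    - apply Rmult_le_compat_r; auto.
      eapply Rle_trans; [apply Rabs_le_norm1; eauto | apply norm1_mpow].
    - replace (mat_norm1 d q ^ n * norm1 d u * (r ^ n / INR (fact n)))
        with (norm1 d u * (mat_norm1 d q ^ n * r ^ n / INR (fact n))) by (field; lra).
      apply Rmult_le_compat_l; auto. apply norm1_nonneg. }
  eapply Rbar_lt_le_trans; [|exact Hrad]. simpl. unfold r; lra.
Qed.

Lemma ex_pseries_expm_coef u i x : (i < d)%nat -> ex_pseries (expm_coef u i) x.
Proof. intros Hi. apply CV_radius_inside, CV_radius_expm_coef; auto. Qed.

Lemma expm_partial_sums_cv t u i : (i < d)%nat ->
  Un_cv (fun N => sum_f_R0 (fun k => t ^ k / INR (fact k) * mpow d q k u i) N)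
        (PSeries (expm_coef u i) t).
Proof.
  intros Hi. apply is_lim_seq_Reals.
  assert (Hc := PSeries_correct _ _ (ex_pseries_expm_coef u i t Hi)).
  eapply filterlim_ext; [|exact Hc]. intros N. simpl.
  rewrite sum_n_Reals. apply sum_eq. intros k _. unfold expm_coef.
  rewrite pow_n_pow. unfold scal; simpl; unfold mult; simpl.
  assert (Hf := INR_fact_pos k). field. lra.
Qed.

Lemma expm_PSeries t u i : (i < d)%nat -> expm d q t u i = PSeries (expm_coef u i) t.
Proof. intros Hi. apply lim_unique, expm_partial_sums_cv; auto. Qed.

Lemma expm_derive u i x : (i < d)%nat ->
  is_derive (fun s => expm d q s u i) x (expm d q x (mv d q u) i).
Proof.
  intros Hi. rewrite (expm_PSeries x (mv d q u) i Hi).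
  eapply is_derive_ext; [intros s; symmetry; apply expm_PSeries; auto|].
  replace (PSeries (expm_coef (mv d q u) i) x) with (PSeries (PS_derive (expm_coef u i)) x).
  - apply is_derive_PSeries, CV_radius_expm_coef; auto.
  - apply PSeries_ext. intros n. unfold PS_derive, expm_coef.
    rewrite mpow_mv, fact_simpl, mult_INR.
    assert (Hf := INR_fact_pos n). assert (0 < INR (S n)) by (apply lt_0_INR; lia).
    simpl mpow. field. lra.
Qed.

Lemma expm_continuous u i x : (i < d)%nat -> continuous (fun s => expm d q s u i) x.
Proof.
  intros Hi. apply (ex_derive_continuous (fun s => expm d q s u i)).
  eexists; apply expm_derive; auto.
Qed.

Lemma expm_lin t a b u v i : (i < d)%nat ->
  expm d q t (fun j => a * u j + b * v j) i = a * expm d q t u i + b * expm d q t v i.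
Proof.
  intros Hi. rewrite !expm_PSeries, <- !PSeries_scal by auto.
  rewrite <- PSeries_plus.
  - apply PSeries_ext. intros k. unfold PS_plus, PS_scal, expm_coef. rewrite mpow_lin.
    unfold plus, scal; simpl; unfold mult; simpl.
    assert (Hf := INR_fact_pos k). field. lra.
  - apply ex_pseries_scal; [apply Rmult_comm | apply ex_pseries_expm_coef; auto].
  - apply ex_pseries_scal; [apply Rmult_comm | apply ex_pseries_expm_coef; auto].
Qed.

Lemma mv_expm t u i : (i < d)%nat -> mv d q (expm d q t u) i = expm d q t (mv d q u) i.
Proof.
  intros Hi. unfold mv at 1.
  rewrite (sumd_ext d _ (fun j => q i j * PSeries (expm_coef u j) t))
    by (intros j Hj; rewrite expm_PSeries; auto).
  destruct (PSeries_sumd d (fun j => q i j) (expm_coef u) t) as [_ ->];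
    [intros; apply ex_pseries_expm_coef; auto|].
  rewrite expm_PSeries by auto. apply PSeries_ext. intros k. unfold expm_coef.
  rewrite mpow_mv. simpl mpow. unfold mv, Rdiv.
  rewrite (Rmult_comm _ (/ INR (fact k))), <- sumd_scal.
  apply sumd_ext. intros; ring.
Qed.

Lemma expm_0 u i : (i < d)%nat -> expm d q 0 u i = u i.
Proof. intros Hi. rewrite expm_PSeries, PSeries_0 by auto. unfold expm_coef. simpl. field. Qed.

Lemma expm_coords t u v i : (forall j, (j < d)%nat -> u j = v j) -> (i < d)%nat ->
  expm d q t u i = expm d q t v i.
Proof.
  intros H Hi. rewrite !expm_PSeries by auto. apply PSeries_ext. intros k. unfold expm_coef.
  rewrite (mpow_coords d q u v); auto.
Qed.

Lemma expm_nonneg_of_nonneg t u i :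
  (forall a b, (a < d)%nat -> (b < d)%nat -> 0 <= q a b) ->
  (forall j, (j < d)%nat -> 0 <= u j) -> (i < d)%nat -> 0 <= t -> 0 <= expm d q t u i.
Proof.
  intros Hq Hu Hi Ht. rewrite expm_PSeries by auto.
  assert (Hterm : forall k, 0 <= t ^ k / INR (fact k) * mpow d q k u i).
  { intros k. apply Rmult_le_pos; [|apply mpow_nonneg; auto].
    apply Rdiv_le_0_compat; [apply pow_le; auto | apply INR_fact_pos]. }
  apply (Rle_trans _ (sum_f_R0 (fun k => t ^ k / INR (fact k) * mpow d q k u i) 0)).
  - apply cond_pos_sum; auto.
  - apply sum_incr; [apply expm_partial_sums_cv; auto | auto].
Qed.

End Exponential.

(** * Uniqueness for the linear system [g' = q g] *)

Lemma increment_le_of_derive_le (F dF : R -> R) a b L : a <= b ->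
  (forall x, a <= x <= b -> is_derive F x (dF x)) -> (forall x, a <= x <= b -> dF x <= L) ->
  F b - F a <= L * (b - a).
Proof.
  intros Hab Hd HL.
  destruct (MVT_gen F a b dF) as [c [Hc ->]]; rewrite ?Rmin_left, ?Rmax_right in * by lra.
  - intros x Hx. apply Hd; lra.
  - intros x Hx. apply continuity_pt_filterlim, (ex_derive_continuous F x).
    eexists; apply Hd; lra.
  - apply Rmult_le_compat_r; [lra|]. apply HL; lra.
Qed.

Lemma increment_ge_of_derive_ge (F dF : R -> R) a b L : a <= b ->
  (forall x, a <= x <= b -> is_derive F x (dF x)) -> (forall x, a <= x <= b -> L <= dF x) ->
  L * (b - a) <= F b - F a.
Proof.
  intros Hab Hd HL.
  assert (H := increment_le_of_derive_le (fun x => - F x) (fun x => - dF x) a b (- L) Hab).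
  enough (- F b - - F a <= - L * (b - a)) by lra.
  apply H; [intros; apply (is_derive_opp F); auto | intros x Hx; specialize (HL x Hx); lra].
Qed.

Lemma is_derive_exp_scal K x : is_derive (fun y => exp (- (K * y))) x (- K * exp (- (K * x))).
Proof. auto_derive; [auto | ring]. Qed.

Lemma is_derive_sumd_sq n (g : R -> vec) (dg : vec) s :
  (forall i, (i < n)%nat -> is_derive (fun s => g s i) s (dg i)) ->
  is_derive (fun s => sumd n (fun i => g s i * g s i)) s (sumd n (fun i => 2 * g s i * dg i)).
Proof.
  induction n as [|n IH]; intros H; simpl; [exact (is_derive_const 0 s)|].
  replace (sumd n (fun i => 2 * g s i * dg i) + 2 * g s n * dg n)
    with (sumd n (fun i => 2 * g s i * dg i) + (dg n * g s n + g s n * dg n)) by ring.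
  apply (is_derive_plus (fun s => sumd n (fun i => g s i * g s i)) (fun s => g s n * g s n));
    [apply IH; intros; apply H; lia|].
  apply (is_derive_mult (fun s => g s n)); [apply H; lia | apply H; lia | apply Rmult_comm].
Qed.

Lemma mul_le_of_sq_le qij a b E : a * a <= E -> b * b <= E ->
  2 * (qij * a * b) <= Rabs qij * (2 * E).
Proof.
  intros Ha Hb. destruct (Rle_dec 0 qij).
  - rewrite Rabs_pos_eq by lra.
    assert (0 <= qij * ((a - b) * (a - b))) by (apply Rmult_le_pos; [lra|apply Rle_0_sqr]).
    assert (qij * (a * a) <= qij * E) by (apply Rmult_le_compat_l; lra).
    assert (qij * (b * b) <= qij * E) by (apply Rmult_le_compat_l; lra). nra.
  - rewrite Rabs_left by lra.
    assert (0 <= - qij * ((a + b) * (a + b))) by (apply Rmult_le_pos; [lra|apply Rle_0_sqr]).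
    assert (- qij * (a * a) <= - qij * E) by (apply Rmult_le_compat_l; lra).
    assert (- qij * (b * b) <= - qij * E) by (apply Rmult_le_compat_l; lra). nra.
Qed.

Lemma energy_mv_le d q w :
  sumd d (fun i => 2 * w i * mv d q w i) <= 2 * mat_norm1 d q * sumd d (fun i => w i * w i).
Proof.
  set (E := sumd d (fun i => w i * w i)).
  assert (Hsq : forall j, (j < d)%nat -> w j * w j <= E).
  { intros j Hj. apply (sumd_ge_term d (fun i => w i * w i)); auto. intros; apply Rle_0_sqr. }
  replace (2 * mat_norm1 d q * E) with (sumd d (fun a => sumd d (fun b => Rabs (q a b) * (2 * E)))).
  - apply sumd_le. intros a Ha. unfold mv.
    rewrite Rmult_assoc, <- !sumd_scal. apply sumd_le. intros b Hb.
    assert (H := mul_le_of_sq_le (q a b) (w a) (w b) E (Hsq a Ha) (Hsq b Hb)). lra.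
  - replace (2 * mat_norm1 d q * E) with (2 * E * mat_norm1 d q) by ring.
    unfold mat_norm1. rewrite <- sumd_scal. apply sumd_ext. intros a _.
    rewrite <- sumd_scal. apply sumd_ext. intros; ring.
Qed.

(* [|g s|^2 e^{-2 mat_norm1 q s}] is nonincreasing and vanishes at [0]. *)
Lemma linear_ode_zero d q (g : R -> vec) :
  (forall s i, (i < d)%nat -> is_derive (fun s => g s i) s (mv d q (g s) i)) ->
  (forall i, (i < d)%nat -> g 0 i = 0) ->
  forall s, 0 <= s -> forall i, (i < d)%nat -> g s i = 0.
Proof.
  intros Hd H0 s Hs i Hi.
  set (K := 2 * mat_norm1 d q).
  set (E := fun s => sumd d (fun i => g s i * g s i)).
  set (dE := fun s => sumd d (fun i => 2 * g s i * mv d q (g s) i)).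
  assert (HE : forall x, 0 <= E x) by (intros x; apply sumd_nonneg; intros; apply Rle_0_sqr).
  assert (Hdecr : E s * exp (- (K * s)) - E 0 * exp (- (K * 0)) <= 0 * (s - 0)).
  { apply (increment_le_of_derive_le (fun x => E x * exp (- (K * x)))
             (fun x => dE x * exp (- (K * x)) + E x * (- K * exp (- (K * x)))) 0 s 0 Hs).
    - intros x _. apply (is_derive_mult E (fun x => exp (- (K * x))));
        [apply is_derive_sumd_sq; intros; apply Hd; auto
        | apply is_derive_exp_scal | apply Rmult_comm].
    - intros x _. assert (Hx := exp_pos (- (K * x))). assert (Hen := energy_mv_le d q (g x)).
      fold K in Hen. unfold dE, E. nra. }
  assert (HE0 : E 0 = 0).
  { unfold E. rewrite (sumd_ext d _ (fun _ => 0)) by (intros j Hj; rewrite H0; auto; ring).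
    apply sumd_zero. }
  assert (HEs : E s = 0).
  { rewrite HE0 in Hdecr. assert (Hx := exp_pos (- (K * s))). assert (HEn := HE s). nra. }
  assert (g s i * g s i <= E s).
  { apply (sumd_ge_term d (fun i => g s i * g s i)); auto. intros; apply Rle_0_sqr. }
  nra.
Qed.

(** * Positivity of [e^{tq}] for Q-matrices *)

Definition diag_bound (d : nat) (q : mat) : R := norm1 d (fun i => q i i).

Definition shift_mat (d : nat) (q : mat) : mat :=
  fun i j => q i j + (if Nat.eq_dec i j then diag_bound d q else 0).

Lemma shift_mat_nonneg d q : Qmatrix d q ->
  forall a b, (a < d)%nat -> (b < d)%nat -> 0 <= shift_mat d q a b.
Proof.
  intros [_ [_ [Hoff _]]] a b Ha Hb. unfold shift_mat.
  destruct (Nat.eq_dec a b) as [<-|Hne].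
  - assert (Rabs (q a a) <= diag_bound d q) by (apply (Rabs_le_norm1 d (fun i => q i i)); auto).
    assert (- q a a <= Rabs (q a a)) by (rewrite <- Rabs_Ropp; apply Rle_abs). lra.
  - assert (0 <= q a b) by (apply Hoff; auto). lra.
Qed.

Lemma mv_shift_mat d q w j : (j < d)%nat ->
  mv d (shift_mat d q) w j = mv d q w j + diag_bound d q * w j.
Proof.
  intros Hj. unfold mv, shift_mat. rewrite <- (sumd_delta d _ j w Hj), <- sumd_plus.
  apply sumd_ext; intros; ring.
Qed.

(* Both sides solve [g' = q g] with the same initial value. *)
Lemma expm_shift_mat d q t v j : (j < d)%nat -> 0 <= t ->
  expm d q t v j = exp (- (diag_bound d q * t)) * expm d (shift_mat d q) t v j.
Proof.
  intros Hj Ht. set (c := diag_bound d q). set (B := shift_mat d q).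
  set (g := fun s j => exp (- (c * s)) * expm d B s v j - expm d q s v j).
  enough (g t j = 0) by (unfold g in *; lra).
  apply (linear_ode_zero d q g); auto.
  - intros s i Hi.
    replace (mv d q (g s) i)
      with (- c * exp (- (c * s)) * expm d B s v i + exp (- (c * s)) * expm d B s (mv d B v) i
            - expm d q s (mv d q v) i).
    + apply (is_derive_minus (fun s => exp (- (c * s)) * expm d B s v i)).
      * apply (is_derive_mult (fun s => exp (- (c * s))) (fun s => expm d B s v i));
          [apply is_derive_exp_scal | apply expm_derive; auto | apply Rmult_comm].
      * apply expm_derive; auto.
    + rewrite (mv_coords d q (g s)
                 (fun j => exp (- (c * s)) * expm d B s v j + (-1) * expm d q s v j))
        by (intros; unfold g; ring).
      rewrite mv_lin, <- !mv_expm by auto. unfold B. rewrite mv_shift_mat by auto. fold c. ring.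
  - intros i Hi. unfold g. rewrite !expm_0 by auto. rewrite Rmult_0_r, Ropp_0, exp_0. ring.
Qed.

Lemma expm_nonneg d q t v i : Qmatrix d q -> 0 <= t ->
  (forall j, (j < d)%nat -> 0 <= v j) -> (i < d)%nat -> 0 <= expm d q t v i.
Proof.
  intros Hq Ht Hv Hi. rewrite expm_shift_mat by auto.
  apply Rmult_le_pos; [apply Rlt_le, exp_pos|].
  apply expm_nonneg_of_nonneg; auto. apply shift_mat_nonneg; auto.
Qed.

Lemma expm_const d q t c i : Qmatrix d q -> (i < d)%nat -> expm d q t (fun _ => c) i = c.
Proof.
  intros Hq Hi. rewrite expm_PSeries, PSeries_decr_1 by (auto; apply ex_pseries_expm_coef; auto).
  rewrite (PSeries_ext _ (fun _ => 0)), PSeries_const_0.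
  - unfold expm_coef; simpl; field.
  - intros n. unfold PS_decr_1, expm_coef. rewrite mpow_const by auto. unfold Rdiv; ring.
Qed.

Lemma expm_le_compat d q t u v i : Qmatrix d q -> 0 <= t ->
  (forall j, (j < d)%nat -> u j <= v j) -> (i < d)%nat -> expm d q t u i <= expm d q t v i.
Proof.
  intros Hq Ht Huv Hi.
  assert (H := expm_nonneg d q t (fun j => 1 * v j + (-1) * u j) i Hq Ht
                 ltac:(intros j Hj; specialize (Huv j Hj); lra) Hi).
  rewrite expm_lin in H by auto. lra.
Qed.

Lemma expm_le_const d q t u M i : Qmatrix d q -> 0 <= t ->
  (forall j, (j < d)%nat -> u j <= M) -> (i < d)%nat -> expm d q t u i <= M.
Proof. intros. rewrite <- (expm_const d q t M i) by auto. apply expm_le_compat; auto. Qed.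

Lemma expm_ge_const d q t u M i : Qmatrix d q -> 0 <= t ->
  (forall j, (j < d)%nat -> M <= u j) -> (i < d)%nat -> M <= expm d q t u i.
Proof. intros. rewrite <- (expm_const d q t M i) by auto. apply expm_le_compat; auto. Qed.

(** * The affine flows [S_q] *)

Lemma integral_RInt (g : R -> R) a b : (forall x, continuous g x) -> integral g a b = RInt g a b.
Proof.
  intros Hc.
  assert (Hex : ex_RInt g a b) by (apply (ex_RInt_continuous (V := R_CompleteNormedModule)); auto).
  assert (pr0 := ex_RInt_Reals_0 _ _ _ Hex). unfold integral.
  destruct (epsilon_spec (inhabits 0)
              (fun I => exists pr : Riemann_integrable g a b, RiemannInt pr = I)
              (ex_intro _ (RiemannInt pr0) (ex_intro _ pr0 eq_refl))) as [pr <-].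
  symmetry. apply RInt_Reals.
Qed.

Lemma is_derive_mv d q (g : R -> vec) (dg : vec) x i :
  (forall j, (j < d)%nat -> is_derive (fun s => g s j) x (dg j)) ->
  is_derive (fun s => mv d q (g s) i) x (mv d q dg i).
Proof.
  intros H. unfold mv.
  enough (forall n, (n <= d)%nat ->
    is_derive (fun s => sumd n (fun j => q i j * g s j)) x (sumd n (fun j => q i j * dg j)))
    by auto.
  induction n as [|n IH]; intros Hn; simpl; [exact (is_derive_const 0 x)|].
  apply (is_derive_plus (fun s => sumd n (fun j => q i j * g s j)) (fun s => q i n * g s n));
    [apply IH; lia | apply is_derive_scal, H; lia].
Qed.

Lemma derive_zero_const (F : R -> R) a b : (forall x, is_derive F x 0) -> F b = F a.
Proof.
  intros Hd.
  assert (Hle : forall a b, a <= b -> F b = F a).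
  { intros a' b' Hab.
    assert (H1 := increment_le_of_derive_le F (fun _ => 0) a' b' 0 Hab
                    (fun x _ => Hd x) (fun _ _ => Rle_refl 0)).
    assert (H2 := increment_ge_of_derive_ge F (fun _ => 0) a' b' 0 Hab
                    (fun x _ => Hd x) (fun _ _ => Rle_refl 0)).
    lra. }
  destruct (Rle_dec a b); [|symmetry]; apply Hle; lra.
Qed.

Section Flow.
Variables (d : nat) (q : mat) (fq : vec).
Hypothesis Hq : Qmatrix d q.

Lemma Sq_RInt h u i : (i < d)%nat ->
  Sq d q fq h u i = expm d q h u i + RInt (fun s => expm d q s fq i) 0 h.
Proof. intros Hi. unfold Sq. rewrite integral_RInt; auto. intros; apply expm_continuous; auto. Qed.

Lemma Sq_0 u i : (i < d)%nat -> Sq d q fq 0 u i = u i.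
Proof. intros Hi. rewrite Sq_RInt, expm_0, RInt_point by auto. unfold zero; simpl. ring. Qed.

Lemma Sq_derive_expm u i x : (i < d)%nat ->
  is_derive (fun h => Sq d q fq h u i) x (expm d q x (mv d q u) i + expm d q x fq i).
Proof.
  intros Hi. eapply is_derive_ext; [intros h; symmetry; apply Sq_RInt; auto|].
  apply (is_derive_plus (fun h => expm d q h u i)); [apply expm_derive; auto|].
  apply (is_derive_RInt (fun s => expm d q s fq i) (RInt (fun s => expm d q s fq i) 0) 0 x).
  - apply filter_forall. intros b. apply (RInt_correct (V := R_CompleteNormedModule)).
    apply (ex_RInt_continuous (V := R_CompleteNormedModule)).
    intros; apply expm_continuous; auto.
  - apply expm_continuous; auto.
Qed.

(* The difference of the two sides has derivative [0] and vanishes at [h = 0]. *)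
Lemma Sq_generator u i h : (i < d)%nat ->
  mv d q (Sq d q fq h u) i + fq i = expm d q h (mv d q u) i + expm d q h fq i.
Proof.
  intros Hi.
  set (F := fun h => mv d q (Sq d q fq h u) i + fq i
                     - expm d q h (mv d q u) i - expm d q h fq i).
  assert (HF : F h = F 0).
  { apply derive_zero_const. intros x.
    assert (D1 := is_derive_mv d q (fun s => Sq d q fq s u)
                    (fun j => expm d q x (mv d q u) j + expm d q x fq j) x i
                    ltac:(intros j Hj; apply Sq_derive_expm; auto)).
    assert (D := is_derive_minus _ _ _ _ _
                   (is_derive_minus _ _ _ _ _
                      (is_derive_plus _ _ _ _ _ D1 (is_derive_const (fq i) x))
                      (expm_derive d q (mv d q u) i x Hi))
                   (expm_derive d q fq i x Hi)).
    unfold F.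
    replace 0 with (mv d q (fun j => expm d q x (mv d q u) j + expm d q x fq j) i
                    + zero - expm d q x (mv d q (mv d q u)) i - expm d q x (mv d q fq) i);
      [exact D|].
    rewrite (mv_coords d q _ (fun j => 1 * expm d q x (mv d q u) j + 1 * expm d q x fq j))
      by (intros; ring).
    rewrite mv_lin, !mv_expm by auto. unfold zero; simpl. ring. }
  unfold F in HF. rewrite !expm_0 in HF by auto.
  rewrite (mv_coords d q (Sq d q fq 0 u) u) in HF by (intros; apply Sq_0; auto).
  lra.
Qed.

Lemma Sq_derive u i x : (i < d)%nat ->
  is_derive (fun h => Sq d q fq h u i) x (mv d q (Sq d q fq x u) i + fq i).
Proof. intros Hi. rewrite Sq_generator by auto. apply Sq_derive_expm; auto. Qed.

Lemma Sq_semigroup h k u i : 0 <= k -> (i < d)%nat ->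
  Sq d q fq (h + k) u i = Sq d q fq k (Sq d q fq h u) i.
Proof.
  intros Hk Hi.
  set (G := fun k j => Sq d q fq (h + k) u j - Sq d q fq k (Sq d q fq h u) j).
  enough (G k i = 0) by (unfold G in *; lra).
  apply (linear_ode_zero d q G); auto.
  - intros s j Hj.
    assert (D1 : is_derive (fun s => Sq d q fq (h + s) u j) s
                   (mv d q (Sq d q fq (h + s) u) j + fq j)).
    { replace (mv d q (Sq d q fq (h + s) u) j + fq j)
        with (scal 1 (mv d q (Sq d q fq (h + s) u) j + fq j))
        by (unfold scal; simpl; unfold mult; simpl; ring).
      apply (is_derive_comp (fun y => Sq d q fq y u j) (fun y => h + y));
        [apply Sq_derive; auto|].
      replace 1 with (0 + 1) by ring.
      apply (is_derive_plus (fun _ => h) (fun y => y));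
        [exact (is_derive_const h s) | exact (is_derive_id s)]. }
    replace (mv d q (G s) j)
      with (mv d q (Sq d q fq (h + s) u) j + fq j
            - (mv d q (Sq d q fq s (Sq d q fq h u)) j + fq j)).
    + exact (is_derive_minus _ _ _ _ _ D1 (Sq_derive _ j s Hj)).
    + rewrite (mv_coords d q (G s) (fun j => 1 * Sq d q fq (h + s) u j
                 + (-1) * Sq d q fq s (Sq d q fq h u) j))
        by (intros; unfold G; ring).
      rewrite mv_lin. ring.
  - intros j Hj. unfold G. rewrite Rplus_0_r, Sq_0 by auto. ring.
Qed.

Lemma Sq_le_const h u M i : (forall j, (j < d)%nat -> fq j <= 0) -> 0 <= h ->
  (forall j, (j < d)%nat -> u j <= M) -> (i < d)%nat -> Sq d q fq h u i <= M.
Proof.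
  intros Hf Hh Hu Hi. rewrite Sq_RInt by auto.
  assert (expm d q h u i <= M) by (apply expm_le_const; auto).
  assert (HI : RInt (fun s => expm d q s fq i) 0 h <= RInt (fun _ => 0) 0 h).
  { apply RInt_le; auto.
    - apply (ex_RInt_continuous (V := R_CompleteNormedModule)).
      intros; apply expm_continuous; auto.
    - apply (ex_RInt_continuous (V := R_CompleteNormedModule)). intros; apply continuous_const.
    - intros x Hx. apply expm_le_const; auto. lra. }
  rewrite RInt_const in HI. unfold scal in HI; simpl in HI; unfold mult in HI; simpl in HI.
  lra.
Qed.

Lemma Sq_ge_const h u m i : (forall j, (j < d)%nat -> fq j = 0) -> 0 <= h ->
  (forall j, (j < d)%nat -> m <= u j) -> (i < d)%nat -> m <= Sq d q fq h u i.
Proof.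
  intros Hf Hh Hu Hi. rewrite Sq_RInt by auto.
  assert (m <= expm d q h u i) by (apply expm_ge_const; auto).
  rewrite (RInt_ext _ (fun _ => 0)), RInt_const.
  - unfold scal; simpl; unfold mult; simpl. lra.
  - intros x _. rewrite (expm_coords d q x fq (fun _ => 0)) by auto. apply expm_const; auto.
Qed.

Lemma Sq_le_shift h u v c i : 0 <= h ->
  (forall j, (j < d)%nat -> u j <= v j + c) -> (i < d)%nat ->
  Sq d q fq h u i <= Sq d q fq h v i + c.
Proof.
  intros Hh Huv Hi. unfold Sq.
  assert (H : expm d q h u i <= expm d q h (fun j => 1 * v j + c * 1) i).
  { apply expm_le_compat; auto. intros j Hj. specialize (Huv j Hj). lra. }
  rewrite expm_lin, (expm_const d q h 1 i) in H by auto. lra.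
Qed.

Lemma Sq_increment_le h u L i : 0 <= h ->
  (forall j, (j < d)%nat -> mv d q u j + fq j <= L) -> (i < d)%nat ->
  Sq d q fq h u i <= u i + h * L.
Proof.
  intros Hh HL Hi.
  enough (Sq d q fq h u i - Sq d q fq 0 u i <= L * (h - 0)) by (rewrite Sq_0 in *; auto; lra).
  apply (increment_le_of_derive_le (fun s => Sq d q fq s u i)
           (fun x => expm d q x (mv d q u) i + expm d q x fq i)); auto.
  - intros x _. apply Sq_derive_expm; auto.
  - intros x Hx. rewrite <- (Rmult_1_l (expm d q x (mv d q u) i)),
      <- (Rmult_1_l (expm d q x fq i)), <- expm_lin by auto.
    apply expm_le_const; [auto | lra | intros j Hj; specialize (HL j Hj); lra | auto].
Qed.

Lemma Sq_increment_ge h u L i : 0 <= h ->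
  (forall j, (j < d)%nat -> - L <= mv d q u j + fq j) -> (i < d)%nat ->
  u i - h * L <= Sq d q fq h u i.
Proof.
  intros Hh HL Hi.
  enough (- L * (h - 0) <= Sq d q fq h u i - Sq d q fq 0 u i) by (rewrite Sq_0 in *; auto; lra).
  apply (increment_ge_of_derive_ge (fun s => Sq d q fq s u i)
           (fun x => expm d q x (mv d q u) i + expm d q x fq i)); auto.
  - intros x _. apply Sq_derive_expm; auto.
  - intros x Hx. rewrite <- (Rmult_1_l (expm d q x (mv d q u) i)),
      <- (Rmult_1_l (expm d q x fq i)), <- expm_lin by auto.
    apply expm_ge_const; [auto | lra | intros j Hj; specialize (HL j Hj); lra | auto].
Qed.

End Flow.

Lemma vsup_lub (A : vec -> Prop) i :
  (exists v, A v) -> (exists B, forall v, A v -> v i <= B) ->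
  is_lub (fun x => exists v, A v /\ v i = x) (vsup A i).
Proof.
  intros [v0 Hv0] [B HB]. unfold vsup. apply epsilon_spec.
  destruct (completeness (fun x => exists v, A v /\ v i = x)) as [m Hm].
  - exists B. intros x [v [Hv <-]]. auto.
  - exists (v0 i), v0. auto.
  - exists m; auto.
Qed.

Lemma is_lub_approx (A : R -> Prop) N eps : is_lub A N -> 0 < eps -> exists a, A a /\ N - eps < a.
Proof.
  intros [_ Hleast] Heps. apply NNPP. intros Hno.
  enough (N <= N - eps) by lra.
  apply Hleast. intros a Ha. apply Rnot_lt_le. intros Hlt. apply Hno. eauto.
Qed.

Lemma is_lub_of_dyadic_approx (A B : R -> Prop) (b : nat -> R) N :
  is_lub A N -> (forall y, B y -> y <= N) -> (forall n, B (b n)) ->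
  (forall a, A a -> exists K, forall n, a <= b n + K / 2 ^ n) ->
  is_lub B N /\ Un_cv b N.
Proof.
  intros HA HBN Hb Happrox.
  assert (Hsmall : forall K eps, 0 < eps -> exists n0, forall n, (n >= n0)%nat -> K / 2 ^ n < eps).
  { intros K eps Heps. destruct (cv_pow_half K eps Heps) as [n0 Hn0]. exists n0.
    intros n Hn. specialize (Hn0 n Hn). unfold R_dist in Hn0. rewrite Rminus_0_r in Hn0.
    eapply Rle_lt_trans; [apply Rle_abs | exact Hn0]. }
  split.
  - split; [exact HBN|]. intros y Hy. apply HA. intros a Ha.
    apply Rnot_lt_le. intros Hlt. destruct (Happrox a Ha) as [K HK].
    destruct (Hsmall K (a - y)) as [n0 Hn0]; [lra|].
    specialize (HK n0). specialize (Hn0 n0 (le_n _)). assert (Hy0 := Hy _ (Hb n0)). lra.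
  - intros eps Heps. destruct (is_lub_approx A N (eps / 2) HA) as [a [Ha Hgt]]; [lra|].
    destruct (Happrox a Ha) as [K HK]. destruct (Hsmall K (eps / 2)) as [n0 Hn0]; [lra|].
    exists n0. intros n Hn. specialize (HK n). specialize (Hn0 n Hn).
    assert (Hbn := HBN _ (Hb n)). unfold R_dist. rewrite Rabs_left1; lra.
Qed.

Definition sum_list (l : list R) : R := fold_right Rplus 0 l.

Lemma sum_list_app a b : sum_list (a ++ b) = sum_list a + sum_list b.
Proof. induction a as [|x a IH]; simpl; [lra|]. rewrite IH. lra. Qed.

Lemma sum_list_repeat h n : sum_list (repeat h n) = INR n * h.
Proof.
  induction n as [|n IH]; simpl repeat; simpl sum_list; [simpl; ring|].
  rewrite IH, S_INR. ring.
Qed.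

Lemma sum_list_nonneg l : Forall (Rle 0) l -> 0 <= sum_list l.
Proof. induction 1; simpl; lra. Qed.

Lemma Forall_nonneg_repeat h n : 0 <= h -> Forall (Rle 0) (repeat h n).
Proof. intros Hh. apply Forall_forall. intros x Hx. apply repeat_spec in Hx. subst. auto. Qed.

Fixpoint diffs (l : list R) : list R :=
  match l with
  | a :: ((b :: _) as r) => (b - a) :: diffs r
  | _ => nil
  end.

Lemma diffs_nonneg l : incr l -> Forall (Rle 0) (diffs l).
Proof.
  induction l as [|a l IH]; simpl; auto. destruct l as [|b l]; auto.
  intros [Hab Hl]. constructor; [lra | auto].
Qed.

Lemma sum_list_diffs a r : sum_list (diffs (a :: r)) = last (a :: r) 0 - a.
Proof.
  revert a. induction r as [|b r IH]; intros a; [simpl; ring|].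
  change (sum_list (diffs (a :: b :: r))) with ((b - a) + sum_list (diffs (b :: r))).
  rewrite IH. change (last (a :: b :: r) 0) with (last (b :: r) 0). ring.
Qed.

Definition grid (k n : nat) (del : R) : list R := map (fun j => INR j * del) (seq k (S n)).

Lemma grid_0 k del : grid k 0 del = INR k * del :: nil.
Proof. reflexivity. Qed.

Lemma grid_S k n del : grid k (S n) del = INR k * del :: grid (S k) n del.
Proof. reflexivity. Qed.

Lemma diffs_grid k n del : diffs (grid k n del) = repeat del n.
Proof.
  revert k. induction n as [|n IH]; intros k; [reflexivity|].
  specialize (IH (S k)). rewrite grid_S.
  destruct n as [|n]; [rewrite grid_0 | rewrite grid_S in IH |- *];
    change (repeat del (S ?m)) with (del :: repeat del m); rewrite <- ?IH;
    unfold diffs; fold diffs; rewrite S_INR; f_equal; ring.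
Qed.

Lemma incr_grid k n del : 0 < del -> incr (grid k n del).
Proof.
  intros Hdel. revert k. induction n as [|n IH]; intros k; [exact I|].
  specialize (IH (S k)). rewrite grid_S.
  destruct n as [|n]; [rewrite grid_0 | rewrite grid_S in IH |- *];
    split; auto; rewrite S_INR; lra.
Qed.

Lemma last_grid k n del : last (grid k n del) 0 = INR (k + n) * del.
Proof.
  revert k. induction n as [|n IH]; intros k; [rewrite Nat.add_0_r; reflexivity|].
  rewrite grid_S, Nat.add_succ_r, <- Nat.add_succ_l, <- IH.
  destruct n; reflexivity.
Qed.

Lemma split_at_partial_sum (del : R) (A : list R) : 0 < del -> Forall (Rle 0) A ->
  del <= sum_list A ->
  exists A1 x A2, A = A1 ++ x :: A2 /\ sum_list A1 < del /\ del <= sum_list A1 + x.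
Proof.
  revert del. induction A as [|a A IH]; intros del Hd Hn Hs; simpl in *; [lra|].
  inversion Hn as [|? ? Ha HA]; subst. destruct (Rle_dec del a).
  - exists nil, a, A. simpl. repeat split; auto; lra.
  - destruct (IH (del - a)) as [A1 [x [A2 [-> [H1 H2]]]]]; auto; try lra.
    exists (a :: A1), x, A2. simpl. repeat split; auto; lra.
Qed.

(** * The one-step operators [E_h] *)

Definition bounded_by (d : nat) (M : R) (u : vec) : Prop :=
  forall j, (j < d)%nat -> Rabs (u j) <= M.

Section Nisio.
Variables (d : nat) (P : mat -> Prop) (f : mat -> vec) (q0 : mat).
Hypothesis HQ : forall q, P q -> Qmatrix d q.
Hypothesis HP0 : P q0.
Hypothesis Hq0 : forall i, (i < d)%nat -> f q0 i = 0.
Hypothesis Hfsup : forall i, (i < d)%nat -> is_lub (fun x => exists q, P q /\ f q i = x) 0.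
Hypothesis HQfin : forall (u : vec) i, (i < d)%nat ->
  exists l, is_lub (fun x => exists q, P q /\ x = mv d q u i + f q i) l.

Notation E := (Eh d P f).

Lemma f_nonpos q j : P q -> (j < d)%nat -> f q j <= 0.
Proof. intros Hq Hj. apply (Hfsup j Hj). exists q; auto. Qed.

Lemma Eh_lub h u M i : 0 <= h -> bounded_by d M u -> (i < d)%nat ->
  is_lub (fun x => exists v, (exists q, P q /\ v = Sq d q (f q) h u) /\ v i = x) (E h u i).
Proof.
  intros Hh Hu Hi. apply vsup_lub.
  - exists (Sq d q0 (f q0) h u), q0. auto.
  - exists M. intros v [q [Hq ->]]. apply Sq_le_const; auto.
    + intros; apply f_nonpos; auto.
    + intros j Hj. specialize (Hu j Hj). apply Rabs_le_between in Hu. lra.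
Qed.

Lemma Sq_le_Eh h u M i q : 0 <= h -> bounded_by d M u -> (i < d)%nat -> P q ->
  Sq d q (f q) h u i <= E h u i.
Proof.
  intros Hh Hu Hi Hq. apply (Eh_lub h u M i Hh Hu Hi).
  exists (Sq d q (f q) h u). split; auto. exists q; auto.
Qed.

Lemma Eh_le h u M i y : 0 <= h -> bounded_by d M u -> (i < d)%nat ->
  (forall q, P q -> Sq d q (f q) h u i <= y) -> E h u i <= y.
Proof.
  intros Hh Hu Hi Hy. apply (Eh_lub h u M i Hh Hu Hi).
  intros x [v [[q [Hq ->]] <-]]. auto.
Qed.

Lemma Eh_bounded h u M : 0 <= h -> bounded_by d M u -> bounded_by d M (E h u).
Proof.
  intros Hh Hu i Hi.
  assert (HuM : forall j, (j < d)%nat -> - M <= u j <= M)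
    by (intros j Hj; apply Rabs_le_between, Hu; auto).
  apply Rabs_le. split.
  - eapply Rle_trans; [|apply (Sq_le_Eh h u M i q0); auto].
    apply Sq_ge_const; auto. intros j Hj. apply HuM; auto.
  - apply (Eh_le h u M i); auto. intros q Hq.
    apply Sq_le_const; auto; [intros; apply f_nonpos | intros j Hj; apply HuM]; auto.
Qed.

Lemma Eh_le_shift h u v M c : 0 <= h -> bounded_by d M u -> bounded_by d M v ->
  (forall j, (j < d)%nat -> u j <= v j + c) -> forall i, (i < d)%nat -> E h u i <= E h v i + c.
Proof.
  intros Hh Hu Hv Huv i Hi. apply (Eh_le h u M i); auto. intros q Hq.
  eapply Rle_trans; [apply Sq_le_shift; eauto|].
  apply Rplus_le_compat_r, (Sq_le_Eh h v M i q); auto.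
Qed.

(* Only an inequality: [E h \o E k] may use different [q] on the two steps. *)
Lemma Eh_add_le h k u M i : 0 <= h -> 0 <= k -> bounded_by d M u -> (i < d)%nat ->
  E (h + k) u i <= E h (E k u) i.
Proof.
  intros Hh Hk Hu Hi. apply (Eh_le (h + k) u M i); [lra|auto|auto|]. intros q Hq.
  rewrite Rplus_comm, Sq_semigroup by auto.
  eapply Rle_trans; [apply (Sq_le_shift d q (f q) (HQ q Hq) h _ (E k u) 0); auto|].
  - intros j Hj. rewrite Rplus_0_r. apply (Sq_le_Eh k u M j q); auto.
  - rewrite Rplus_0_r. apply (Sq_le_Eh h (E k u) M i q); auto. apply Eh_bounded; auto.
Qed.

(* The value at [u = -2M e_j] of the generator bounds [(q u)_j + f_q j] over all [M]-bounded
   [u] (see [Qmatrix_mv_le]); it is finite by [HQfin]. *)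
Definition upper_drift (M : R) (j : nat) : R :=
  epsilon (inhabits 0)
    (is_lub (fun x => exists q, P q /\
       x = mv d q (fun k => if Nat.eq_dec j k then - (2 * M) else 0) j + f q j)).

Definition drift_const (M : R) : R := norm1 d (upper_drift M) + 2 * Rabs M * diag_bound d q0.

Lemma drift_const_nonneg M : 0 <= drift_const M.
Proof.
  unfold drift_const, diag_bound.
  assert (0 <= Rabs M) by apply Rabs_pos.
  assert (0 <= norm1 d (upper_drift M)) by apply norm1_nonneg.
  assert (0 <= norm1 d (fun j => q0 j j)) by apply norm1_nonneg.
  nra.
Qed.

Lemma generator_le_drift q u M j : P q -> bounded_by d M u -> (j < d)%nat ->
  mv d q u j + f q j <= drift_const M.
Proof.
  intros Hq Hu Hj. set (w := fun k => if Nat.eq_dec j k then - (2 * M) else 0).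
  assert (Hlub : is_lub (fun x => exists q, P q /\ x = mv d q w j + f q j) (upper_drift M j))
    by (unfold upper_drift; apply epsilon_spec, HQfin; auto).
  assert (Hw : mv d q w j = - (2 * M) * q j j).
  { unfold mv, w. rewrite <- (sumd_delta d _ j (q j) Hj). apply sumd_ext. intros; ring. }
  assert (mv d q u j <= mv d q w j) by (rewrite Hw; apply Qmatrix_mv_le; auto).
  assert (mv d q w j + f q j <= upper_drift M j) by (apply Hlub; exists q; auto).
  assert (upper_drift M j <= norm1 d (upper_drift M))
    by (eapply Rle_trans; [apply Rle_abs | apply Rabs_le_norm1; auto]).
  assert (0 <= 2 * Rabs M * diag_bound d q0).
  { assert (0 <= Rabs M) by apply Rabs_pos.
    assert (0 <= diag_bound d q0) by apply norm1_nonneg. nra. }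
  unfold drift_const. lra.
Qed.

Lemma generator_q0_ge_drift u M j : bounded_by d M u -> (j < d)%nat ->
  - drift_const M <= mv d q0 u j + f q0 j.
Proof.
  intros Hu Hj. rewrite Hq0 by auto.
  assert (Hneg : - mv d q0 u j <= - (2 * M) * q0 j j).
  { replace (- mv d q0 u j) with (mv d q0 (fun k => -1 * u k + 0 * u k) j)
      by (rewrite mv_lin; ring).
    apply Qmatrix_mv_le; auto. intros k Hk. replace (-1 * u k + 0 * u k) with (- u k) by ring.
    rewrite Rabs_Ropp. auto. }
  assert (HMq := proj1 (proj1 (Rabs_le_between (M * q0 j j) _) (Rle_refl _))).
  rewrite Rabs_mult in HMq.
  assert (Rabs M * Rabs (q0 j j) <= Rabs M * diag_bound d q0)
    by (apply Rmult_le_compat_l;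
        [apply Rabs_pos | apply (Rabs_le_norm1 d (fun i => q0 i i)); auto]).
  assert (0 <= norm1 d (upper_drift M)) by apply norm1_nonneg.
  unfold drift_const. lra.
Qed.

Lemma Eh_drift h u M i : 0 <= h -> bounded_by d M u -> (i < d)%nat ->
  u i - h * drift_const M <= E h u i <= u i + h * drift_const M.
Proof.
  intros Hh Hu Hi. split.
  - eapply Rle_trans; [|apply (Sq_le_Eh h u M i q0); auto].
    apply Sq_increment_ge; auto. intros j Hj. apply generator_q0_ge_drift; auto.
  - apply (Eh_le h u M i); auto. intros q Hq.
    apply Sq_increment_le; auto. intros j Hj. apply generator_le_drift; auto.
Qed.

Lemma Eh_0 u i : (i < d)%nat -> E 0 u i = u i.
Proof.
  intros Hi. assert (Hu : bounded_by d (norm1 d u) u) by (intros j Hj; apply Rabs_le_norm1; auto).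
  destruct (Eh_drift 0 u (norm1 d u) i (Rle_refl 0) Hu Hi). lra.
Qed.

Definition Ecomp (hs : list R) (u : vec) : vec := fold_right (fun h w => E h w) u hs.

Lemma Ecomp_app a b u : Ecomp (a ++ b) u = Ecomp a (Ecomp b u).
Proof. apply fold_right_app. Qed.

Lemma Ecomp_bounded hs u M : Forall (Rle 0) hs -> bounded_by d M u -> bounded_by d M (Ecomp hs u).
Proof. induction 1; intros Hu; simpl; auto. apply Eh_bounded; auto. Qed.

Lemma Ecomp_le_shift hs u v M c : Forall (Rle 0) hs -> bounded_by d M u -> bounded_by d M v ->
  (forall j, (j < d)%nat -> u j <= v j + c) ->
  forall i, (i < d)%nat -> Ecomp hs u i <= Ecomp hs v i + c.
Proof.
  intros Hn. induction Hn; intros Hu Hv Huv i Hi; simpl; auto.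
  apply (Eh_le_shift x _ _ M); auto; apply Ecomp_bounded; auto.
Qed.

Lemma Ecomp_drift hs u M i : Forall (Rle 0) hs -> bounded_by d M u -> (i < d)%nat ->
  u i - sum_list hs * drift_const M <= Ecomp hs u i <= u i + sum_list hs * drift_const M.
Proof.
  intros Hn Hu Hi. induction Hn as [|h hs Hh Hn IH]; simpl; [lra|].
  assert (H := Eh_drift h (Ecomp hs u) M i Hh (Ecomp_bounded hs u M Hn Hu) Hi). lra.
Qed.

Lemma Ecomp_split_le a b x y u M i : Forall (Rle 0) a -> Forall (Rle 0) b -> 0 <= x -> 0 <= y ->
  bounded_by d M u -> (i < d)%nat -> Ecomp (a ++ (x + y) :: b) u i <= Ecomp (a ++ x :: y :: b) u i.
Proof.
  intros Ha Hb Hx Hy Hu. revert i. induction Ha as [|h a Hh Ha IH]; intros i Hi; simpl.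
  - apply (Eh_add_le x y (Ecomp b u) M i); auto. apply Ecomp_bounded; auto.
  - rewrite <- (Rplus_0_r (E h (Ecomp (a ++ x :: y :: b) u) i)).
    apply (Eh_le_shift h _ _ M 0); auto.
    + apply Ecomp_bounded; auto. apply Forall_app; split; auto. constructor; auto; lra.
    + apply Ecomp_bounded; auto. apply Forall_app; split; auto.
    + intros j Hj. rewrite Rplus_0_r. auto.
Qed.

Lemma Ecomp_snoc_le_Eh a y w M i : Forall (Rle 0) a -> 0 <= y -> bounded_by d M w -> (i < d)%nat ->
  Ecomp (a ++ y :: nil) w i
  <= E (sum_list a + y) w i + 2 * drift_const M * (sum_list a + y) * INR (length a).
Proof.
  intros Ha Hy Hw Hi. assert (HC := drift_const_nonneg M).
  destruct a as [|h a]; [simpl; rewrite Rplus_0_l; lra|].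
  assert (Hlen : 1 <= INR (length (h :: a)))
    by (simpl length; rewrite S_INR; generalize (pos_INR (length a)); lra).
  assert (Hdel : 0 <= sum_list (h :: a) + y)
    by (generalize (sum_list_nonneg _ Ha); lra).
  destruct (Ecomp_drift ((h :: a) ++ y :: nil) w M i) as [_ Hup]; auto.
  - apply Forall_app; auto.
  - destruct (Eh_drift (sum_list (h :: a) + y) w M i Hdel Hw Hi) as [Hlo _].
    rewrite sum_list_app in Hup. simpl sum_list at 2 in Hup.
    assert (2 * drift_const M * (sum_list (h :: a) + y) * 1
            <= 2 * drift_const M * (sum_list (h :: a) + y) * INR (length (h :: a)))
      by (apply Rmult_le_compat_l; [nra | auto]).
    lra.
Qed.

(* Induction on [N]: cut [A] where its partial sums reach [del], split the step there
   ([Ecomp_split_le]) and compare the first block with a single step of length [del]. *)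
Lemma Ecomp_le_uniform del M : 0 < del -> forall N A u, Forall (Rle 0) A ->
  sum_list A = INR N * del -> bounded_by d M u -> forall i, (i < d)%nat ->
  Ecomp A u i <= Ecomp (repeat del N) u i + 2 * drift_const M * del * INR (length A).
Proof.
  intros Hd N. assert (HC := drift_const_nonneg M).
  induction N as [|N IH]; intros A u Hn Hs Hu i Hi.
  - simpl in Hs. rewrite Rmult_0_l in Hs. simpl.
    destruct (Ecomp_drift A u M i Hn Hu Hi). rewrite Hs in *.
    assert (0 <= 2 * drift_const M * del * INR (length A))
      by (apply Rmult_le_pos; [nra | apply pos_INR]).
    nra.
  - destruct (split_at_partial_sum del A Hd Hn) as [A1 [x [A2 [-> [Hlt Hge]]]]].
    { rewrite Hs, S_INR. generalize (pos_INR N). nra. }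
    apply Forall_app in Hn. destruct Hn as [HA1 HxA2]. inversion HxA2 as [|? ? Hx HA2]; subst.
    set (y := del - sum_list A1). set (z := x - y).
    assert (Hy : 0 <= y) by (unfold y; lra). assert (Hz : 0 <= z) by (unfold z, y; lra).
    assert (Hsz : sum_list (z :: A2) = INR N * del).
    { rewrite sum_list_app, S_INR in Hs. simpl sum_list in *. unfold z, y. lra. }
    assert (HzA2 : Forall (Rle 0) (z :: A2)) by (constructor; auto).
    assert (Hrep : bounded_by d M (Ecomp (repeat del N) u))
      by (apply Ecomp_bounded, Hu; apply Forall_nonneg_repeat; lra).
    set (c := 2 * drift_const M * del * INR (length (z :: A2))).
    assert (Hsplit : Ecomp (A1 ++ x :: A2) u i <= Ecomp (A1 ++ y :: nil) (Ecomp (z :: A2) u) i).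
    { replace x with (y + z) by (unfold z; ring).
      rewrite <- Ecomp_app, <- app_assoc. apply (Ecomp_split_le A1 A2 y z u M i); auto. }
    assert (Hind : Ecomp (A1 ++ y :: nil) (Ecomp (z :: A2) u) i
                   <= Ecomp (A1 ++ y :: nil) (Ecomp (repeat del N) u) i + c).
    { apply (Ecomp_le_shift _ _ _ M); auto.
      - apply Forall_app; auto.
      - apply Ecomp_bounded; auto. }
    assert (Hlast := Ecomp_snoc_le_Eh A1 y (Ecomp (repeat del N) u) M i HA1 Hy Hrep Hi).
    replace (sum_list A1 + y) with del in Hlast by (unfold y; ring).
    rewrite length_app, plus_INR. simpl repeat. simpl Ecomp at 2.
    replace (INR (length (x :: A2))) with (INR (length (z :: A2))) by reflexivity.
    unfold c in Hind. lra.
Qed.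

(** * Partitions and the Nisio semigroup *)

Lemma Epi_aux_Ecomp l u : Epi_aux d P f l u = Ecomp (diffs l) u.
Proof.
  induction l as [|a l IH]; auto. destruct l as [|b l]; auto.
  change (E (b - a) (Epi_aux d P f (b :: l) u) = E (b - a) (Ecomp (diffs (b :: l)) u)).
  rewrite IH. reflexivity.
Qed.

Lemma iterv_Ecomp n h u : iterv n (E h) u = Ecomp (repeat h n) u.
Proof. induction n as [|n IH]; simpl; auto. rewrite IH. reflexivity. Qed.

Lemma partition_Ecomp t l u i : partition t l -> (i < d)%nat ->
  Epi d P f l u i = Ecomp (diffs l) u i /\ Forall (Rle 0) (diffs l) /\ sum_list (diffs l) = t.
Proof.
  intros [[r ->] [Hincr Hlast]] Hi.
  split; [|split; [apply diffs_nonneg; auto | rewrite sum_list_diffs, Hlast; ring]].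
  destruct r as [|b r]; [apply Eh_0; auto | apply (f_equal (fun v => v i)), Epi_aux_Ecomp].
Qed.

Lemma uniform_partition t n u i : 0 <= t -> (0 < n)%nat -> (i < d)%nat ->
  exists l, partition t l /\ Epi d P f l u i = Ecomp (repeat (t / INR n) n) u i.
Proof.
  intros Ht Hn Hi. assert (HnR : 0 < INR n) by (apply lt_0_INR; auto).
  destruct (Rle_lt_or_eq_dec 0 t Ht) as [Htp | <-].
  - assert (Hpart : partition t (grid 0 n (t / INR n))).
    { split; [|split].
      - destruct n as [|n]; [lia|]. rewrite grid_S. eexists. f_equal. simpl. ring.
      - apply incr_grid, Rdiv_lt_0_compat; auto.
      - rewrite last_grid, Nat.add_0_l. field. lra. }
    exists (grid 0 n (t / INR n)). split; auto.
    rewrite (proj1 (partition_Ecomp _ _ u i Hpart Hi)), diffs_grid. reflexivity.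
  - exists (0 :: nil). split; [split; [exists nil | split]; reflexivity|].
    assert (Hu : bounded_by d (norm1 d u) u) by (intros j Hj; apply Rabs_le_norm1; auto).
    destruct (Ecomp_drift (repeat (0 / INR n) n) u (norm1 d u) i) as [Hlo Hup]; auto.
    { apply Forall_nonneg_repeat. unfold Rdiv. lra. }
    rewrite sum_list_repeat in Hlo, Hup. unfold Rdiv in Hlo, Hup.
    simpl Epi. rewrite Eh_0 by auto. lra.
Qed.

Lemma Nisio_lub t u i : 0 <= t -> (i < d)%nat ->
  is_lub (fun x => exists v, (exists l, partition t l /\ v = Epi d P f l u) /\ v i = x)
         (Nisio d P f t u i).
Proof.
  intros Ht Hi. apply vsup_lub.
  - destruct (uniform_partition t 1 u i) as [l [Hl _]]; auto. exists (Epi d P f l u), l. auto.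
  - exists (norm1 d u). intros v [l [Hl ->]].
    destruct (partition_Ecomp t l u i Hl Hi) as [-> [Hn _]].
    eapply Rle_trans; [apply Rle_abs|].
    apply (Ecomp_bounded (diffs l) u (norm1 d u)); auto.
    intros j Hj. apply Rabs_le_norm1; auto.
Qed.

Lemma partition_le_dyadic t l u i : partition t l -> (i < d)%nat ->
  exists K, forall n, Epi d P f l u i <= Ecomp (repeat (t / 2 ^ n) (2 ^ n)) u i + K / 2 ^ n.
Proof.
  intros Hl Hi. destruct (partition_Ecomp t l u i Hl Hi) as [-> [Hn Hs]].
  set (M := norm1 d u). assert (HC := drift_const_nonneg M).
  assert (Hu : bounded_by d M u) by (intros j Hj; apply Rabs_le_norm1; auto).
  exists (2 * drift_const M * t * INR (length (diffs l))). intros n.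
  assert (Hp : 0 < 2 ^ n) by (apply pow_lt; lra).
  destruct (Rle_lt_or_eq_dec 0 t) as [Htp | <-]; [rewrite <- Hs; apply sum_list_nonneg; auto| |].
  - replace (2 * drift_const M * t * INR (length (diffs l)) / 2 ^ n)
      with (2 * drift_const M * (t / 2 ^ n) * INR (length (diffs l))) by (field; lra).
    apply Ecomp_le_uniform; auto.
    + apply Rdiv_lt_0_compat; auto.
    + rewrite Hs, pow_INR. change (INR 2) with 2. field. lra.
  - assert (Hrep := Forall_nonneg_repeat (0 / 2 ^ n) (2 ^ n) ltac:(unfold Rdiv; lra)).
    destruct (Ecomp_drift _ u M i Hrep Hu Hi) as [Hlo _].
    destruct (Ecomp_drift _ u M i Hn Hu Hi) as [_ Hup].
    rewrite sum_list_repeat in Hlo. rewrite Hs in Hup. unfold Rdiv in *. lra.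
Qed.

Lemma Nisio_uniform_dyadic t u0 i : 0 <= t -> (i < d)%nat ->
  Nisio d P f t u0 i
    = vsup (fun v => exists n : nat, (0 < n)%nat /\ v = iterv n (E (t / INR n)) u0) i
  /\ Un_cv (fun n => iterv (2 ^ n)%nat (E (t / 2 ^ n)) u0 i) (Nisio d P f t u0 i).
Proof.
  intros Ht Hi.
  set (U := fun v => exists n : nat, (0 < n)%nat /\ v = iterv n (E (t / INR n)) u0).
  assert (HU : forall y, (exists v, U v /\ v i = y) -> y <= Nisio d P f t u0 i).
  { intros y [v [[n [Hn ->]] <-]]. rewrite iterv_Ecomp.
    destruct (uniform_partition t n u0 i) as [l [Hl <-]]; auto.
    apply (Nisio_lub t u0 i Ht Hi). exists (Epi d P f l u0). eauto. }
  destruct (is_lub_of_dyadic_approx _ (fun y => exists v, U v /\ v i = y)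
              (fun n => iterv (2 ^ n)%nat (E (t / 2 ^ n)) u0 i) _ (Nisio_lub t u0 i Ht Hi) HU)
    as [HUlub Hcv].
  - intros n. exists (iterv (2 ^ n) (E (t / 2 ^ n)) u0). split; auto.
    exists (2 ^ n)%nat. split; [apply Nat.neq_0_lt_0, Nat.pow_nonzero; lia|].
    rewrite pow_INR. reflexivity.
  - intros a [v [[l [Hl ->]] <-]]. destruct (partition_le_dyadic t l u0 i Hl Hi) as [K HK].
    exists K. intros n. rewrite iterv_Ecomp. apply HK.
  - split; [|exact Hcv]. apply (is_lub_u _ _ _ HUlub), vsup_lub.
    + exists (iterv 1 (E (t / INR 1)) u0), 1%nat. auto.
    + exists (Nisio d P f t u0 i). intros v Hv. apply HU. eauto.
Qed.

End Nisio.

Theorem mainTheorem7 (d : nat) (P : mat -> Prop) (f : mat -> vec)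
  (HQ : forall q, P q -> Qmatrix d q)
  (Hf0 : exists q0, P q0 /\ forall i, (i < d)%nat -> f q0 i = 0)
  (Hfsup : forall i, (i < d)%nat -> is_lub (fun x => exists q, P q /\ f q i = x) 0)
  (HQfin : forall (u : vec) i, (i < d)%nat ->
     exists l, is_lub (fun x => exists q, P q /\ x = mv d q u i + f q i) l)
  (t : R) (u0 : vec) (Ht : 0 <= t) :
  forall i, (i < d)%nat ->
    Nisio d P f t u0 i
      = vsup (fun v => exists n : nat, (0 < n)%nat /\
                 v = iterv n (Eh d P f (t / INR n)) u0) i
    /\ Un_cv (fun n => iterv (2 ^ n)%nat (Eh d P f (t / 2 ^ n)) u0 i) (Nisio d P f t u0 i).
Proof.
  destruct Hf0 as [q0 [HP0 Hq0]]. intros i Hi.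
  exact (Nisio_uniform_dyadic d P f q0 HQ HP0 Hq0 Hfsup HQfin t u0 i Ht Hi).
Qed.
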